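(* For every positive $\alpha=(\alpha_x)_{x\in V}$ and every $k\in\mathbb N$, $$\inf_{\xi\in\Xi_{k-1}}\mathrm{gap}_{\rm RW}(\alpha+\xi)\ge\frac{\alpha_{\min}}{\alpha_{\min}+k-1}\,\mathrm{gap}_{\rm RW}(\alpha),$$ where $\alpha_{\min}=\min_x\alpha_x$.
   Context: $V$ is a finite set with symmetric non-negative weights $c_{xy}=c_{yx}\ge0$ forming a connected graph. $\Xi_{k-1}:=\{\xi\in\mathbb N_0^V:\sum_x\xi_x=k-1\}$ and $\alpha+\xi=(\alpha_x+\xi_x)_{x\in V}$. For a positive weight vector $\beta$, $\mathrm{gap}_{\rm RW}(\beta)$ is the smallest nonzero eigenvalue of $-A_\beta$, where $A_\beta\phi(x)=\sum_yc_{xy}\beta_y(\phi(y)-\phi(x))$ for $\phi:V\to\mathbb R$. *)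

From HB Require Import structures.
From mathcomp Require Import all_boot all_order all_algebra.
From mathcomp Require Import all_classical all_reals.
Set Implicit Arguments. Unset Strict Implicit. Unset Printing Implicit Defensive.
Import Order.TTheory GRing.Theory Num.Theory.
Local Open Scope ring_scope.
Local Open Scope classical_set_scope.

(* V = 'I_n.  Generator A_beta as a matrix acting on column vectors phi:
   (A_beta phi)(x) = sum_y c x y * beta y * (phi y - phi x). *)
Definition gen_mx (R : realType) (n : nat) (c : 'I_n -> 'I_n -> R)
  (beta : 'I_n -> R) : 'M[R]_n :=
  \matrix_(x, y) (c x y * beta y - (x == y)%:R * \sum_(z < n) c x z * beta z).

(* gap_RW(beta): smallest nonzero eigenvalue of -A_beta.  MathComp's
   [eigenvalue] uses row vectors (v *m g = a v), so we apply it to the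
   transpose, which has the same eigenvalues. *)
Definition gapRW (R : realType) (n : nat) (c : 'I_n -> 'I_n -> R)
  (beta : 'I_n -> R) : R :=
  inf [set l : R | eigenvalue (- gen_mx c beta)^T l /\ l != 0].

Definition wconnected (R : realType) (n : nat) (c : 'I_n -> 'I_n -> R) :=
  forall x y : 'I_n, connect [rel u v | 0 < c u v] x y.

Definition Xi (n m : nat) : set ('I_n -> nat) :=
  [set xi | (\sum_(x < n) xi x)%N = m].
Arguments Xi : clear implicits.

From HB Require Import structures.
From mathcomp Require Import all_boot all_order all_algebra.
From mathcomp Require Import all_classical all_reals all_analysis.
From mathcomp Require Import ring lra.
Import Order.TTheory GRing.Theory Num.Theory.
Import numFieldNormedType.Exports.
Local Open Scope ring_scope.
Local Open Scope classical_set_scope.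
Set Implicit Arguments. Unset Strict Implicit. Unset Printing Implicit Defensive.

(* Write |f|_b^2 = sum_x b_x f_x^2 and D_b(f) = sum_{x,y} c_xy b_x b_y (f_x - f_y)^2.  The
   operator -A_b is self-adjoint for the weights b, with 2 <f, -A_b f>_b = D_b(f), so gap(b) is
   the minimum of D_b(f) / (2 |f|_b^2) over the f with b-mean zero; by compactness the minimum
   is attained, at an eigenfunction.  Now let a <= b <= K a pointwise and -A_b f = l f with
   l <> 0, so that f has b-mean zero.  If g is f recentred to have a-mean zero, then
     gap(a) |f|_b^2 <= gap(a) |g|_b^2 <= K gap(a) |g|_a^2 <= K D_a(g) / 2 <= K D_b(f) / 2
                    = K l |f|_b^2,
   hence gap(a) <= K gap(b).  For b = alpha + xi with xi in Xi_(k-1) we have xi_x <= k - 1 <=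
   (k - 1) alpha_x / alpha_min, i.e. K = (alpha_min + k - 1) / alpha_min. *)

Lemma lbound_le_inf (R : realType) (S : set R) x :
  (forall y, S y -> x <= y) -> S !=set0 \/ x <= 0 -> x <= inf S.
Proof.
move=> x_lb [S0|x_le0]; first exact: lb_le_inf.
have [->|/set0P S0] := eqVneq S set0; [by rewrite inf0 | exact: lb_le_inf].
Qed.

Lemma inf_range_min (R : realType) n (f : 'I_n -> R) (x1 : 'I_n) :
  exists2 x0, inf (range f) = f x0 & forall x, f x0 <= f x.
Proof.
have [x0 _ f_min] := @arg_minP _ R _ x1 xpredT f isT.
have f_lb : lbound (range f) (f x0) by move=> _ [x _ <-]; exact: f_min.
exists x0 => [|x]; last exact: f_min.
apply/eqP; rewrite eq_le lb_le_inf ?andbT //; last by exists (f x0), x0.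
by apply: ge_inf; [exists (f x0) | exists x0].
Qed.

Lemma continuous_sum_ord (T : topologicalType) (K : numFieldType) m (F : 'I_m -> T -> K) :
  (forall i, continuous (F i)) -> continuous (fun t => \sum_(i < m) F i t).
Proof. by move=> Fc t; apply: cvg_big => // [|i _]; [exact: add_continuous | exact: Fc]. Qed.

Lemma row_ord0 (T : Type) n (f : 'I_n -> T) : (\row_x f x) ord0 = f.
Proof. by apply/funext => x; rewrite mxE. Qed.

Lemma Xi_le n m xi x : Xi n m xi -> (xi x <= m)%N.
Proof. by rewrite /Xi /= => <-; rewrite (bigD1 x) //= leq_addr. Qed.

Lemma Xi_point n m (x1 : 'I_n) : Xi n m (fun x => if x == x1 then m else 0%N).
Proof. by rewrite /Xi /= (bigD1 x1) //= eqxx big1 ?addn0 // => x /negbTE ->. Qed.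

Section WeightedSums.
Variables (R : realType) (n : nat).
Implicit Types (b f h : 'I_n -> R) (s t : R).

Definition wsum b f := \sum_(x < n) b x * f x.
Definition wdot b f h := \sum_(x < n) b x * f x * h x.

Lemma wsum_scale b f t : wsum b (fun x => f x * t) = wsum b f * t.
Proof. by rewrite /wsum mulr_suml; apply: eq_bigr => x _ /=; ring. Qed.

Lemma wdot_scale b f t : wdot b (fun x => f x * t) (fun x => f x * t) = wdot b f f * t ^+ 2.
Proof. by rewrite /wdot mulr_suml; apply: eq_bigr => x _ /=; ring. Qed.

Lemma wsum_expand b f h s : wsum b (fun x => f x + s * h x) = wsum b f + s * wsum b h.
Proof. by rewrite /wsum mulr_sumr -big_split; apply: eq_bigr => x _ /=; ring. Qed.

Lemma wdot_expand b f h s :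
  wdot b (fun x => f x + s * h x) (fun x => f x + s * h x) =
  wdot b f f + 2 * s * wdot b f h + s ^+ 2 * wdot b h h.
Proof. by rewrite /wdot !mulr_sumr -!big_split; apply: eq_bigr => x _ /=; ring. Qed.

Lemma wdotC b f h : wdot b f h = wdot b h f.
Proof. by apply: eq_bigr => x _ /=; ring. Qed.

Lemma wdot_ge0 b f : (forall x, 0 <= b x) -> 0 <= wdot b f f.
Proof. by move=> b_ge0; apply: sumr_ge0 => x _; rewrite -mulrA -expr2 mulr_ge0 ?sqr_ge0. Qed.

Lemma wdot_ge_term b f x : (forall x, 0 <= b x) -> b x * f x ^+ 2 <= wdot b f f.
Proof.
move=> b_ge0; rewrite /wdot (bigD1 x) //= -mulrA -expr2 lerDl.
by apply: sumr_ge0 => y _; rewrite -mulrA -expr2 mulr_ge0 ?sqr_ge0.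
Qed.

Lemma wdot_gt0 b f x0 : (forall x, 0 < b x) -> f x0 != 0 -> 0 < wdot b f f.
Proof.
move=> b_gt0 fx0; rewrite /wdot (bigD1 x0) //= -mulrA; apply: ltr_pwDl.
  by rewrite mulr_gt0 // -expr2 exprn_even_gt0.
by apply: sumr_ge0 => x _; rewrite -mulrA -expr2 mulr_ge0 ?sqr_ge0 ?ltW.
Qed.

Lemma wdot_eq0 b f : (forall x, 0 < b x) -> wdot b f f = 0 -> forall x, f x = 0.
Proof.
move=> b_gt0 f0 x; apply/eqP/negPn/negP => fx0.
by move: (wdot_gt0 b_gt0 fx0); rewrite f0 ltxx.
Qed.

Lemma wdot_shift_ge b f m :
  (forall x, 0 <= b x) -> wsum b f = 0 ->
  wdot b f f <= wdot b (fun x => f x - m) (fun x => f x - m).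
Proof.
move=> b_ge0 f0.
have -> : wdot b (fun x => f x - m) (fun x => f x - m)
          = wdot b f f - 2 * m * wsum b f + m ^+ 2 * \sum_(x < n) b x.
  by rewrite /wdot /wsum !mulr_sumr -sumrB -big_split; apply: eq_bigr => x _ /=; ring.
by rewrite f0 mulr0 subr0 lerDl mulr_ge0 ?sqr_ge0 ?sumr_ge0.
Qed.

Lemma wsum_sub_mean b f :
  \sum_(x < n) b x != 0 -> wsum b (fun x => f x - wsum b f / \sum_(x < n) b x) = 0.
Proof.
move=> Sb; have -> : forall m, wsum b (fun x => f x - m) = wsum b f - m * \sum_(x < n) b x.
  by move=> m; rewrite /wsum mulr_sumr -sumrB; apply: eq_bigr => x _; ring.
by rewrite divfK // subrr.
Qed.

End WeightedSums.

Section Laplacian.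
Variables (R : realType) (n : nat) (c : 'I_n -> 'I_n -> R).
Hypothesis c_sym : forall x y, c x y = c y x.
Hypothesis c_ge0 : forall x y, 0 <= c x y.
Implicit Types (a b f h : 'I_n -> R) (l s t : R).

(* [laplacian b] is [- A_b]. *)
Definition laplacian b f x := \sum_(y < n) c x y * b y * (f x - f y).

Definition dirichlet b f h :=
  \sum_(x < n) \sum_(y < n) c x y * b x * b y * ((f x - f y) * (h x - h y)).

Lemma gen_mx_laplacian b (v : 'rV[R]_n) x :
  (v *m (- gen_mx c b)^T) ord0 x = laplacian b (v ord0) x.
Proof.
rewrite !mxE /laplacian; under eq_bigr => y _ do rewrite !mxE.
rewrite (eq_bigr (fun y => (x == y)%:R * (v ord0 y * \sum_(z < n) c x z * b z)
                           - c x y * b y * v ord0 y)); last by move=> y _; ring.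
rewrite sumrB (bigD1 x) //= eqxx mul1r [\sum_(i < n | i != x) _]big1 ?addr0; last first.
  by move=> y /negbTE yx; rewrite eq_sym yx mul0r.
by rewrite mulr_sumr -sumrB; apply: eq_bigr => y _; ring.
Qed.

Lemma wsum_laplacian b f : wsum b (laplacian b f) = 0.
Proof.
set T := \sum_(x < n) \sum_(y < n) c x y * b x * b y * (f x - f y).
have -> : wsum b (laplacian b f) = T.
  by apply: eq_bigr => x _; rewrite mulr_sumr; apply: eq_bigr => y _; ring.
suff : T = - T by lra.
rewrite {1}/T exchange_big -sumrN; apply: eq_bigr => x _; rewrite -sumrN.
by apply: eq_bigr => y _; rewrite c_sym; ring.
Qed.

Lemma wdot_laplacian b f h : 2 * wdot b h (laplacian b f) = dirichlet b f h.
Proof.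
set T := \sum_(x < n) \sum_(y < n) c x y * b x * b y * (h x * (f x - f y)).
have -> : wdot b h (laplacian b f) = T.
  by apply: eq_bigr => x _; rewrite mulr_sumr; apply: eq_bigr => y _; ring.
have -> : dirichlet b f h =
    T + \sum_(x < n) \sum_(y < n) c x y * b x * b y * (h y * (f y - f x)).
  rewrite -big_split; apply: eq_bigr => x _ /=.
  by rewrite -big_split; apply: eq_bigr => y _ /=; ring.
have -> : \sum_(x < n) \sum_(y < n) c x y * b x * b y * (h y * (f y - f x)) = T.
  by rewrite exchange_big; apply: eq_bigr => x _; apply: eq_bigr => y _; rewrite c_sym; ring.
ring.
Qed.

Lemma dirichlet_ge0 b f : (forall x, 0 <= b x) -> 0 <= dirichlet b f f.
Proof.
move=> b_ge0; apply: sumr_ge0 => x _; apply: sumr_ge0 => y _.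
by rewrite -expr2 mulr_ge0 ?sqr_ge0 ?mulr_ge0.
Qed.

Lemma dirichlet_le a b f :
  (forall x, 0 <= a x) -> (forall x, a x <= b x) -> dirichlet a f f <= dirichlet b f f.
Proof.
move=> a_ge0 ab; apply: ler_sum => x _; apply: ler_sum => y _.
rewrite -expr2 ler_wpM2r ?sqr_ge0 // -!mulrA ler_wpM2l //.
by rewrite ler_pM // (le_trans (a_ge0 y)).
Qed.

Lemma dirichlet_shift b f m :
  dirichlet b (fun x => f x - m) (fun x => f x - m) = dirichlet b f f.
Proof. by apply: eq_bigr => x _; apply: eq_bigr => y _; ring. Qed.

Lemma dirichlet_scale b f t :
  dirichlet b (fun x => f x * t) (fun x => f x * t) = dirichlet b f f * t ^+ 2.
Proof.
rewrite /dirichlet mulr_suml; apply: eq_bigr => x _; rewrite mulr_suml.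
by apply: eq_bigr => y _; ring.
Qed.

Lemma dirichlet_expand b f h s :
  dirichlet b (fun x => f x + s * h x) (fun x => f x + s * h x) =
  dirichlet b f f + 2 * s * dirichlet b f h + s ^+ 2 * dirichlet b h h.
Proof.
rewrite /dirichlet !mulr_sumr -!big_split; apply: eq_bigr => x _ /=.
by rewrite !mulr_sumr -!big_split; apply: eq_bigr => y _ /=; ring.
Qed.

Lemma eigen_wsum b f l :
  (forall x, laplacian b f x = l * f x) -> l * wsum b f = 0.
Proof.
move=> lf; rewrite -(wsum_laplacian b f) mulr_sumr.
by apply: eq_bigr => x _; rewrite lf; ring.
Qed.

Lemma eigen_dirichlet b f l :
  (forall x, laplacian b f x = l * f x) -> 2 * l * wdot b f f = dirichlet b f f.
Proof.
move=> lf; rewrite -wdot_laplacian -mulrA mulr_sumr; congr (_ * _).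
by apply: eq_bigr => x _; rewrite lf; ring.
Qed.

Hypothesis c_conn : wconnected c.

Lemma dirichlet_eq0_const b f :
  (forall x, 0 < b x) -> dirichlet b f f = 0 -> forall x y, f x = f y.
Proof.
move=> b_gt0 f0.
have term_ge0 x y : 0 <= c x y * b x * b y * ((f x - f y) * (f x - f y)).
  by rewrite -expr2 mulr_ge0 ?sqr_ge0 // !mulr_ge0 // ltW.
have edge x y : 0 < c x y -> f x = f y.
  move=> cxy; have fx0 := psumr_eq0P (fun x _ => sumr_ge0 _ (fun y _ => term_ge0 x y)) f0.
  move/eqP: (psumr_eq0P (fun y _ => term_ge0 x y) (fx0 x isT) (i := y) isT).
  rewrite !mulf_eq0 (gt_eqF cxy) !(gt_eqF (b_gt0 _)) orbb subr_eq0 /= orbb.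
  by move/eqP.
move=> x y; have /connectP [p xp ->] := c_conn x y.
by elim: p x xp => [|z p IHp] x //= /andP [xz zp]; rewrite (edge _ _ xz) IHp.
Qed.

End Laplacian.

Section Rayleigh.
Variables (R : realType) (n : nat) (c : 'I_n -> 'I_n -> R).
Hypothesis c_sym : forall x y, c x y = c y x.
Hypothesis c_ge0 : forall x y, 0 <= c x y.
Hypothesis c_conn : wconnected c.
Implicit Types (a b f h : 'I_n -> R).

Lemma continuous_wsum b : continuous (fun v : 'rV[R]_n => wsum b (v ord0)).
Proof.
apply: continuous_sum_ord => x v; pose e (w : 'rV[R]_n) := w ord0 x.
apply: (@continuousM R _ (fun=> b x) e); [exact: cst_continuous | exact: coord_continuous].
Qed.

Lemma continuous_wdot b : continuous (fun v : 'rV[R]_n => wdot b (v ord0) (v ord0)).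
Proof.
apply: continuous_sum_ord => x v; pose e (w : 'rV[R]_n) := w ord0 x.
apply: (@continuousM R _ (fun w => b x * e w) e); last exact: coord_continuous.
apply: (@continuousM R _ (fun=> b x) e); [exact: cst_continuous | exact: coord_continuous].
Qed.

Lemma continuous_dirichlet b :
  continuous (fun v : 'rV[R]_n => dirichlet c b (v ord0) (v ord0)).
Proof.
apply: continuous_sum_ord => x; apply: continuous_sum_ord => y v.
pose d (w : 'rV[R]_n) := w ord0 x - w ord0 y.
apply: (@continuousM R _ (fun=> c x y * b x * b y) (fun w => d w * d w));
  first exact: cst_continuous.
by apply: (@continuousM R _ d d); apply: continuousB; exact: coord_continuous.
Qed.

Definition mean_zero_sphere b : set 'rV[R]_n :=
  [set v | wsum b (v ord0) = 0 /\ wdot b (v ord0) (v ord0) = 1].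

Lemma mean_zero_sphere_compact b : (forall x, 0 < b x) -> compact (mean_zero_sphere b).
Proof.
move=> b_gt0; pose B x := 1 + (b x)^-1.
apply: (@subclosed_compact _ _ [set v : 'rV[R]_n | forall x, `[- B x, B x]%classic (v ord0 x)]).
- have -> : mean_zero_sphere b = (fun v => wsum b (v ord0)) @^-1` [set x : R | x = 0] `&`
      (fun v => wdot b (v ord0) (v ord0)) @^-1` [set x : R | x = 1] by [].
  apply: closedI; apply: preimage_closed; try exact: closed_eq.
    by move=> v _; exact: continuous_wsum.
  by move=> v _; exact: continuous_wdot.
- by apply: (@rV_compact _ _ (fun x => `[- B x, B x]%classic)) => x; exact: segment_compact.
- move=> v [_ v1] x /=; rewrite in_itv /= -ler_norml /B.
  have bv : b x * v ord0 x ^+ 2 <= 1.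
    by rewrite -v1 wdot_ge_term // => y; exact: ltW.
  have : v ord0 x ^+ 2 <= (b x)^-1 by rewrite -[_^-1]mulr1 ler_pdivlMl.
  (* |v_x| <= 1 + v_x^2 *)
  have := real_normK (num_real (v ord0 x)); nra.
Qed.

Lemma normalize_mean_zero b h :
  (forall x, 0 <= b x) -> wsum b h = 0 -> wdot b h h != 0 ->
  mean_zero_sphere b (\row_x (h x * (Num.sqrt (wdot b h h))^-1)).
Proof.
move=> b_ge0 h0 hn0.
rewrite /mean_zero_sphere /= row_ord0 wsum_scale wdot_scale h0 mul0r exprVn.
by rewrite sqr_sqrtr ?wdot_ge0 ?mulfV.
Qed.

Lemma dirichlet_min_exists a :
  (forall x, 0 < a x) -> (exists h, wsum a h = 0 /\ wdot a h h != 0) ->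
  exists f, [/\ wsum a f = 0, wdot a f f = 1 &
    forall h, wsum a h = 0 -> dirichlet c a f f * wdot a h h <= dirichlet c a h h].
Proof.
move=> a_gt0 [g [g0 gn0]]; have a_ge0 x : 0 <= a x by exact: ltW.
have [v /set_mem [v0 v1] v_min] := compact_EVT_min
  (ex_intro _ _ (normalize_mean_zero a_ge0 g0 gn0)) (mean_zero_sphere_compact a_gt0)
  (continuous_subspaceT (@continuous_dirichlet a)).
exists (v ord0); split => // h h0.
have [->|hn0] := eqVneq (wdot a h h) 0; first by rewrite mulr0 dirichlet_ge0.
have := v_min _ (mem_set (normalize_mean_zero a_ge0 h0 hn0)).
rewrite row_ord0 dirichlet_scale exprVn sqr_sqrtr ?wdot_ge0 //.
by rewrite ler_pdivlMr ?lt0r ?hn0 ?wdot_ge0.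
Qed.

Lemma linear_term_eq0 (d q : R) : (forall s, 0 <= 2 * s * d + s ^+ 2 * q) -> d = 0.
Proof.
move=> dq; pose t := (`|q| + 1)^-1.
have t_gt0 : 0 < t by rewrite invr_gt0 ltr_wpDl.
have tq : t * q < 1.
  have : t * (`|q| + 1) = 1 by rewrite mulVf // gt_eqF // ltr_wpDl.
  have := ler_norm q; nra.
have := dq (- d * t); have := sqr_ge0 d.
have -> : 2 * (- d * t) * d + (- d * t) ^+ 2 * q = d ^+ 2 * (t * (t * q - 2)) by ring.
have : t * (t * q - 2) < 0 by nra.
move=> neg d2 h; apply/eqP; rewrite -sqrf_eq0; apply/eqP; nra.
Qed.

Section Minimizer.
Variables a f : 'I_n -> R.
Hypothesis a_gt0 : forall x, 0 < a x.
Hypothesis f_mean0 : wsum a f = 0.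
Hypothesis f_norm1 : wdot a f f = 1.
Hypothesis f_min :
  forall h, wsum a h = 0 -> dirichlet c a f f * wdot a h h <= dirichlet c a h h.

Let mu := dirichlet c a f f.

(* [s = 0] minimises [s |-> Q(f + s h)], where [Q g = dirichlet g g - mu * wdot g g >= 0]
   vanishes at [f]; hence the linear term of this quadratic vanishes. *)
Lemma dirichlet_min_variation h :
  wsum a h = 0 -> dirichlet c a f h = mu * wdot a f h.
Proof.
move=> h0; apply/eqP; rewrite -subr_eq0; apply/eqP.
apply: (@linear_term_eq0 _ (dirichlet c a h h - mu * wdot a h h)) => s.
have := @f_min (fun x => f x + s * h x).
rewrite wsum_expand f_mean0 h0 mulr0 addr0 => /(_ erefl).
rewrite dirichlet_expand // wdot_expand f_norm1 -/mu; lra.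
Qed.

Lemma dirichlet_min_eigen x : laplacian c a f x = mu / 2 * f x.
Proof.
pose r y := 2 * laplacian c a f y - mu * f y.
have r0 : wsum a r = 0.
  have -> : wsum a r = 2 * wsum a (laplacian c a f) - mu * wsum a f.
    by rewrite /wsum !mulr_sumr -sumrB; apply: eq_bigr => y _; rewrite /r; ring.
  by rewrite wsum_laplacian // f_mean0; ring.
have rr : wdot a r r = 0.
  have -> : wdot a r r = 2 * wdot a r (laplacian c a f) - mu * wdot a r f.
    by rewrite /wdot !mulr_sumr -sumrB; apply: eq_bigr => y _; rewrite /r; ring.
  by rewrite wdot_laplacian // wdotC dirichlet_min_variation // subrr.
by have := wdot_eq0 a_gt0 rr x; rewrite /r; lra.
Qed.

Lemma dirichlet_min_neq0 : mu != 0.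
Proof.
apply/eqP => mu0; case: (pickP (@predT 'I_n)) => [x0 _|no_point]; last first.
  move: f_norm1; rewrite /wdot big1 // => [/eqP|x]; first by rewrite eq_sym oner_eq0.
  by have := no_point x.
have f_const := dirichlet_eq0_const c_ge0 c_conn a_gt0 mu0.
have : wdot a f f = wsum a f * f x0.
  by rewrite /wsum mulr_suml; apply: eq_bigr => x _; rewrite (f_const x x0).
by rewrite f_norm1 f_mean0 mul0r => /eqP; rewrite oner_eq0.
Qed.

End Minimizer.

Lemma rayleigh_eigenvalue a :
  (forall x, 0 < a x) -> (exists h, wsum a h = 0 /\ wdot a h h != 0) ->
  exists l, [/\ eigenvalue (- gen_mx c a)^T l, l != 0 &
    forall h, wsum a h = 0 -> 2 * l * wdot a h h <= dirichlet c a h h].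
Proof.
move=> a_gt0 /(dirichlet_min_exists a_gt0) [f [f0 f1 f_min]].
exists (dirichlet c a f f / 2); split.
- apply/eigenvalueP; exists (\row_x f x).
    by apply/rowP => x; rewrite gen_mx_laplacian row_ord0 !mxE dirichlet_min_eigen.
  apply: contra_neq (@oner_neq0 R) => f_row0; rewrite -f1 /wdot big1 // => x _.
  by have := congr1 (fun v : 'rV[R]_n => v ord0 x) f_row0; rewrite !mxE => ->; rewrite !mulr0.
- by rewrite mulf_eq0 negb_or dirichlet_min_neq0 // invr_eq0 pnatr_eq0.
- by move=> h h0; rewrite mulrCA divff ?pnatr_eq0 // mulr1 f_min.
Qed.

End Rayleigh.

Section SpectralGap.
Variables (R : realType) (n : nat) (c : 'I_n -> 'I_n -> R).
Hypothesis c_sym : forall x y, c x y = c y x.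
Hypothesis c_ge0 : forall x y, 0 <= c x y.
Hypothesis c_conn : wconnected c.
Implicit Types (a b f h : 'I_n -> R) (l : R).

Lemma eigenvector_laplacian b l : eigenvalue (- gen_mx c b)^T l ->
  exists f x0, (forall x, laplacian c b f x = l * f x) /\ f x0 != 0.
Proof.
move=> /eigenvalueP [v vE v0]; exists (v ord0).
have [x0 vx0] : exists x0, v ord0 x0 != 0.
  apply/existsP; apply: contraNT v0; rewrite negb_exists => /forallP v0'.
  by apply/eqP/rowP => x; rewrite mxE; apply/eqP/negPn.
exists x0; split=> // x.
by have := congr1 (fun w : 'rV[R]_n => w ord0 x) vE; rewrite /= gen_mx_laplacian mxE.
Qed.

Lemma eigenvalue_ge0 b l : (forall x, 0 < b x) -> eigenvalue (- gen_mx c b)^T l -> 0 <= l.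
Proof.
move=> b_gt0 /eigenvector_laplacian [f [x0 [lf fx0]]].
have := eigen_dirichlet c_sym lf; have := wdot_gt0 b_gt0 fx0.
have := dirichlet_ge0 c_ge0 f (fun x => ltW (b_gt0 x)); nra.
Qed.

Lemma gapRW_ge0 b : (forall x, 0 < b x) -> 0 <= gapRW c b.
Proof.
move=> b_gt0; apply: lbound_le_inf; last by right.
by move=> l [+ _]; exact: eigenvalue_ge0.
Qed.

Lemma gapRW_le b l : (forall x, 0 < b x) ->
  eigenvalue (- gen_mx c b)^T l -> l != 0 -> gapRW c b <= l.
Proof.
move=> b_gt0 El l0; apply: ge_inf => //; exists 0 => y [Ey _].
exact: eigenvalue_ge0 Ey.
Qed.

Lemma gapRW_rayleigh a h : (forall x, 0 < a x) ->
  wsum a h = 0 -> 2 * gapRW c a * wdot a h h <= dirichlet c a h h.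
Proof.
move=> a_gt0 h0; have a_ge0 x : 0 <= a x by exact: ltW.
have [->|hn0] := eqVneq (wdot a h h) 0; first by rewrite mulr0 dirichlet_ge0.
have [l [El l0 l_min]] :=
  rayleigh_eigenvalue c_sym c_ge0 c_conn a_gt0 (ex_intro _ h (conj h0 hn0)).
apply: le_trans (l_min h h0); rewrite ler_wpM2r ?wdot_ge0 // ler_wpM2l //.
exact: gapRW_le.
Qed.

Lemma gapRW_le_eigenvalue a b K l :
  (forall x, 0 < a x) -> (forall x, a x <= b x) -> (forall x, b x <= K * a x) ->
  eigenvalue (- gen_mx c b)^T l -> l != 0 -> gapRW c a <= K * l.
Proof.
move=> a_gt0 ab bK /eigenvector_laplacian [f [x0 [lf fx0]]] l0.
have a_ge0 x : 0 <= a x by exact: ltW.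
have b_gt0 x : 0 < b x by exact: lt_le_trans (ab x).
have K_gt0 : 0 < K by have := lt_le_trans (b_gt0 x0) (bK x0); rewrite pmulr_lgt0.
have fb0 : wsum b f = 0.
  by have /eqP := eigen_wsum c_sym lf; rewrite mulf_eq0 (negbTE l0) => /eqP.
have Sa : \sum_(x < n) a x != 0.
  by rewrite (bigD1 x0) //= gt_eqF // ltr_wpDr ?sumr_ge0.
pose m := wsum a f / \sum_(x < n) a x; pose g x := f x - m.
have ga0 : wsum a g = 0 by exact: wsum_sub_mean.
have Nfg : wdot b f f <= K * wdot a g g.
  apply: le_trans (wdot_shift_ge m _ fb0) _.
    by move=> x; exact: ltW.
  rewrite /wdot mulr_sumr; apply: ler_sum => x _.
  by rewrite -!mulrA [in leRHS]mulrA ler_wpM2r // -expr2 sqr_ge0.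
have Dgf : 2 * gapRW c a * wdot a g g <= 2 * l * wdot b f f.
  rewrite (eigen_dirichlet c_sym lf); apply: le_trans (gapRW_rayleigh a_gt0 ga0) _.
  by rewrite dirichlet_shift dirichlet_le.
have := gapRW_ge0 a_gt0; have := wdot_gt0 b_gt0 fx0; nra.
Qed.

Lemma gapRW_compare a b K :
  (forall x, 0 < a x) -> (forall x, a x <= b x) -> (forall x, b x <= K * a x) -> 0 < K ->
  K^-1 * gapRW c a <= gapRW c b.
Proof.
move=> a_gt0 ab bK K_gt0; have b_gt0 x : 0 < b x by exact: lt_le_trans (ab x).
(* Nonemptiness: [inf set0 = 0], so if [gapRW c a != 0] then [- A_a] has a nonzero
   eigenvalue; its eigenfunction, multiplied by [a / b], is a witness for [b]. *)
apply: lbound_le_inf => [l [El l0]|].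
  by rewrite ler_pdivrMl // (gapRW_le_eigenvalue a_gt0 ab bK El l0).
have [->|gap_neq0] := eqVneq (gapRW c a) 0; first by right; rewrite mulr0.
have /set0P [l [El l0]] : [set l | eigenvalue (- gen_mx c a)^T l /\ l != 0] != set0.
  by apply: contra_neq gap_neq0 => S0; rewrite /gapRW S0 inf0.
left; have [f [x0 [lf fx0]]] := eigenvector_laplacian El.
pose h x := a x * f x / b x.
have h0 : wsum b h = 0.
  have /eqP := eigen_wsum c_sym lf; rewrite mulf_eq0 (negbTE l0) => /eqP <-.
  by apply: eq_bigr => x _; rewrite /h mulrCA divff ?mulr1 // gt_eqF.
have hn0 : wdot b h h != 0.
  apply/lt0r_neq0/(wdot_gt0 b_gt0 (x0 := x0)).
  by rewrite /h !mulf_neq0 ?invr_eq0 // lt0r_neq0.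
have [l' [El' l'0 _]] :=
  rayleigh_eigenvalue c_sym c_ge0 c_conn b_gt0 (ex_intro _ h (conj h0 hn0)).
by exists l'.
Qed.

End SpectralGap.

Theorem lemma3p4 (R : realType) (n : nat) (c : 'I_n -> 'I_n -> R)
  (c_sym : forall x y, c x y = c y x) (c_ge0 : forall x y, 0 <= c x y)
  (c_conn : wconnected c)
  (alpha : 'I_n -> R) (alpha_pos : forall x, 0 < alpha x)
  (k : nat) (k_pos : (0 < k)%N) :
  inf [set gapRW c (fun x => alpha x + (xi x)%:R) | xi in (Xi n k.-1)]
  >= inf (range alpha) / (inf (range alpha) + (k.-1)%:R) * gapRW c alpha.
Proof.
have beta_gt0 (xi : 'I_n -> nat) x : 0 < alpha x + (xi x)%:R by rewrite ltr_wpDr.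
case: (pickP (@predT 'I_n)) => [x1 _|no_point]; last first.
  have -> : range alpha = set0 by apply/seteqP; split=> // y [x _ _]; have := no_point x.
  rewrite inf0 mul0r mul0r; apply: lbound_le_inf; last by right.
  by move=> _ [xi _ <-]; exact: gapRW_ge0.
have [xm -> alpha_min] := inf_range_min alpha x1.
set m := alpha xm; set k1 : R := (k.-1)%:R.
have m_gt0 : 0 < m := alpha_pos xm.
pose K := (m + k1) / m.
have K_gt0 : 0 < K by rewrite divr_gt0 // ltr_wpDr.
rewrite -[m / _]invf_div -/K.
pose xi1 x := if x == x1 then k.-1 else 0%N.
apply: lbound_le_inf; last by left; exists (gapRW c (fun x => alpha x + (xi1 x)%:R)), xi1;
  first exact: Xi_point.
move=> _ [xi xiXi <-]; apply: gapRW_compare => // x; first by rewrite lerDl.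
have -> : K * alpha x = alpha x + k1 * (alpha x / m) by rewrite /K; field; exact: lt0r_neq0.
rewrite lerD2l; apply: (@le_trans _ _ k1); first by rewrite ler_nat Xi_le.
by rewrite ler_peMr // ler_pdivlMr // mul1r alpha_min.
Qed.
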